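(* In the CDN routing model described in the context, under any routing policy the number of pending requests at any surrogate server $S_i$ is (almost surely, at all times) bounded by $\lceil\psi\mu_i-1\rceil$.
   Context: A CDN has $m$ surrogate servers $S_1,\dots,S_m$ at fixed points $x_1,\dots,x_m$ of a planar network region $G$ of area $\mathcal{A}$. Requests arrive as a Poisson process of rate $\lambda$ with locations i.i.d. uniform on $G$. Server $S_i$ serves requests first-come-first-served with exponential service times of rate $\mu_i$ and unlimited queue; the system starts empty. There is a fixed latency bound $\psi>0$. If $n_i(t)$ requests are pending at $S_i$ at time $t$, let $A_i(t)=\{x\in G:\|x-x_i\|\le\psi-(n_i(t)+1)/\mu_i\}$ (empty if the radius is negative). A routing policy may send a request arriving at time $t$ from location $x$ only to a server $S_i$ with $x\in A_i(t)$ (the requests it can serve within latency $\psi$), or to no surrogate server. *)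

From HB Require Import structures.
From mathcomp Require Import all_boot all_order all_algebra.
From mathcomp Require Import all_classical all_reals all_analysis.
Set Implicit Arguments. Unset Strict Implicit. Unset Printing Implicit Defensive.
Import Order.TTheory GRing.Theory Num.Def Num.Theory.
Local Open Scope classical_set_scope.
Local Open Scope ring_scope.

Definition edist {R : realType} (x y : R * R) : R :=
  Num.sqrt ((x.1 - y.1) ^+ 2 + (x.2 - y.2) ^+ 2).

Definition area {R : realType} : set (R * R) -> \bar R :=
  (@lebesgue_measure R \x @lebesgue_measure R)%E.

(** A_i(t) when n requests are pending at S_i (located at xi, rate mu):
    the closed disc of radius psi - (n+1)/mu around xi, empty if the radius
    is negative. *)
Definition serve_region {R : realType} (psi mu : R) (xi : R * R) (n : nat)
  : set (R * R) :=
  let r := psi - (n.+1)%:R / mu in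
  if r < 0 then set0 else [set x | edist x xi <= r].

(** Requests are indexed by k : nat in order of arrival; request k arrives at
   time T k. [route k] is the routing decision for request k
   ([Some i] = sent to S_i, [None] = not sent to any surrogate server).
   [S i j] is the service time of the j-th request (j = 0,1,...) routed to
   S_i.  Each server is a single FCFS server with unlimited queue; the system
   starts empty at time 0. *)

Section dynamics.
Context {R : realType} {m : nat}.
Variables (T : nat -> R) (route : nat -> option 'I_m) (S : 'I_m -> nat -> R).

Definition nrouted (i : 'I_m) (k : nat) : nat :=
  (\sum_(j < k) (route j == Some i))%N.

Fixpoint lastdep (k : nat) (i : 'I_m) : R :=
  match k with
  | 0 => 0
  | k'.+1 =>
      if route k' == Some i
      then Num.max (T k') (lastdep k' i) + S i (nrouted i k')
      else lastdep k' i
  end.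

Definition departure (k : nat) (i : 'I_m) : R := lastdep k.+1 i.

Definition is_pending (i : 'I_m) (t : R) (k : nat) : bool :=
  [&& route k == Some i, T k <= t & t < departure k i].

(** number of requests among 0..N-1 pending at S_i at time t;
    the number n_i(t) of pending requests is the supremum over N *)
Definition npending (N : nat) (i : 'I_m) (t : R) : nat :=
  (\sum_(k < N) is_pending i t k)%N.

(** n_i at the arrival time of request k, i.e. the number of earlier
    requests still pending at S_i when request k arrives *)
Definition npending_at_arrival (i : 'I_m) (k : nat) : nat :=
  npending k i (T k).

End dynamics.

Definition admissible_policy {R : realType} {m : nat} (psi : R)
  (mu : 'I_m -> R) (xs : 'I_m -> R * R)
  (T : nat -> R) (X : nat -> R * R) (route : nat -> option 'I_m)
  (S : 'I_m -> nat -> R) : Prop :=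
  forall (k : nat) (i : 'I_m), route k = Some i ->
    serve_region psi (mu i) (xs i) (npending_at_arrival T route S i k) (X k).

Definition arrival_time {R : realType} {T0 : Type} (tau : nat -> T0 -> R)
  (k : nat) (w : T0) : R := \sum_(j < k.+1) tau j w.

Section independence.
Context {d : measure_display} {Omega : measurableType d} {R : realType}.
Variable P : probability Omega R.

Definition rv_events {d' : measure_display} {T' : measurableType d'}
  (Y : Omega -> T') : set (set Omega) :=
  [set Y @^-1` B | B in [set B : set T' | measurable B]].

Definition mutually_independent {I : eqType} (F : I -> set (set Omega))
  : Prop :=
  forall (J : seq I) (A : I -> set Omega), uniq J ->
    (forall j, j \in J -> F j (A j)) ->
    P (\big[setI/setT]_(j <- J) A j) = (\prod_(j <- J) P (A j))%E.

End independence.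

(** index set of the primitive random variables:
    inl (inl k) = k-th inter-arrival time, inl (inr k) = k-th location,
    inr (i, j) = j-th service time at S_i *)
Definition cdn_index (m : nat) := ((nat + nat) + ('I_m * nat))%type.

Definition cdn_events {d : measure_display} {Omega : measurableType d}
  {R : realType} {m : nat}
  (tau : nat -> Omega -> R) (X : nat -> Omega -> R * R)
  (S : 'I_m -> nat -> Omega -> R) (c : cdn_index m) : set (set Omega) :=
  match c with
  | inl (inl k) => rv_events (tau k)
  | inl (inr k) => rv_events (X k)
  | inr (i, j) => rv_events (S i j)
  end.

From Pilot Require Import Defs.
From HB Require Import structures.
From mathcomp Require Import all_boot all_order all_algebra.
From mathcomp Require Import all_classical all_reals all_analysis.
Set Implicit Arguments. Unset Strict Implicit. Unset Printing Implicit Defensive.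
Import Order.TTheory GRing.Theory Num.Def Num.Theory.
Local Open Scope classical_set_scope.
Local Open Scope ring_scope.

(* On every sample path where inter-arrival times are nonnegative and no
   request originates exactly at a server, the bound is deterministic.  If
   request N is pending at S_i at time t >= T N, every earlier request pending
   at t was already pending at T N, so at most n := n_i(T N) of them are.
   Admitting N requires its location to lie in the disc of radius
   psi - (n+1)/mu_i around x_i; as it is not the centre, that radius is
   positive, i.e. n + 1 < psi mu_i.  Both sample-path conditions fail only on
   null sets: the exponential law charges no negative number and a uniform
   location on G hits a given point with probability 0. *)

Lemma edist_gt0 {R : realType} (x y : R * R) : x != y -> 0 < Defs.edist x y.
Proof.
move=> xy; rewrite /Defs.edist sqrtr_gt0 lt_neqAle addr_ge0 ?sqr_ge0 // andbT.
rewrite eq_sym paddr_eq0 ?sqr_ge0 // !sqrf_eq0 !subr_eq0.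
by apply: contra xy; case: x => a b; case: y => c e /= /andP[/eqP -> /eqP ->].
Qed.

Lemma serve_region_off_center {R : realType} (psi mu : R) xi n x :
  0 < mu -> x != xi -> serve_region psi mu xi n x -> n.+1%:R < psi * mu.
Proof.
move=> mu_gt0 x_xi; rewrite /serve_region; case: ifP => [_ []|_ /= x_in].
have := lt_le_trans (edist_gt0 x_xi) x_in.
by rewrite subr_gt0 ltr_pdivrMr.
Qed.

Lemma int_le_ceilB1 {R : realType} (z : int) (x : R) :
  z%:~R < x -> z <= ceil (x - 1).
Proof.
have -> : ceil (x - 1) = ceil x - 1 by rewrite ceilDrz ?rpredN1 // ceilN ?ceil1.
by rewrite -ltzD1 subrK ceil_gt_int.
Qed.

Section pending_bound.
Context {R : realType} {m : nat}.
Variables (T : nat -> R) (route : nat -> option 'I_m) (S : 'I_m -> nat -> R).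
Hypothesis T_nondecreasing : {homo T : a b / (a <= b)%N >-> a <= b}.

Lemma npending_le_at_arrival i t N :
  T N <= t -> (npending T route S N i t <= npending_at_arrival T route S i N)%N.
Proof.
move=> TNt; apply: leq_sum => j _.
case: (boolP (is_pending T route S i t j)) => //= /and3P[routej _ tj].
by rewrite lt0b /is_pending routej T_nondecreasing ?(le_lt_trans TNt tj) // ltnW.
Qed.

Variables (psi : R) (mu : 'I_m -> R) (xs : 'I_m -> R * R) (X : nat -> R * R).
Hypothesis mu_gt0 : forall i, 0 < mu i.
Hypothesis psi_gt0 : 0 < psi.
Hypothesis X_off_servers : forall k i, X k != xs i.
Hypothesis admissible : admissible_policy psi mu xs T X route S.

Lemma npending_lt_psi_mu i t N : (npending T route S N i t)%:R < psi * mu i.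
Proof.
elim: N => [|N IH]; first by rewrite /npending big_ord0 mulr_gt0.
rewrite /npending big_ord_recr /= -/(npending T route S N i t).
case pendingN: (is_pending T route S i t N); last by rewrite addn0.
move/and3P: pendingN => [/eqP routeN TNt _].
apply: le_lt_trans (serve_region_off_center (mu_gt0 i) (X_off_servers N i)
                     (admissible routeN)).
by rewrite addn1 ler_nat ltnS npending_le_at_arrival.
Qed.
End pending_bound.

Lemma arrival_time_nondecreasing {R : realType} {T0 : Type}
    (tau : nat -> T0 -> R) w :
  (forall k, 0 <= tau k w) ->
  {homo (fun k => arrival_time tau k w) : a b / (a <= b)%N >-> a <= b}.
Proof.
move=> tau_ge0; apply/nondecreasing_seqP => k.
by rewrite /arrival_time [leRHS]big_ord_recr lerDl.
Qed.

Lemma ae_preimage_null {d d'} {Omega : measurableType d}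
    {T' : measurableType d'} {R : realType}
    (P : {measure set Omega -> \bar R}) (f : {mfun Omega >-> T'}) (B : set T') :
  measurable B -> P (f @^-1` B) = 0%E -> {ae P, forall w, ~ B (f w)}.
Proof.
move=> mB fB0; apply: (@negligibleS _ _ _ _ (f @^-1` B)).
  by move=> w /= /contrapT.
exact/(negligibleP _ (measurable_funPTI f mB)).
Qed.

Lemma exponential_prob_lt0 {R : realType} (lam : R) :
  exponential_prob lam `]-oo, 0[ = 0%E.
Proof.
apply: integral0_eq => x /=; rewrite in_itv /= => x_lt0.
by rewrite lt0_exponential_pdf.
Qed.

Lemma ae_ge0_exponential {d} {Omega : measurableType d} {R : realType}
    (P : probability Omega R) (f : {mfun Omega >-> R}) (lam : R) :
  (forall B, measurable B -> distribution P f B = exponential_prob lam B) ->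
  {ae P, forall w, 0 <= f w}.
Proof.
move=> f_exp; have := f_exp _ (measurable_itv `]-oo, 0[).
rewrite exponential_prob_lt0 => /(ae_preimage_null (measurable_itv _)).
by apply: filterS => w /=; rewrite in_itv /= leNgt => /negP.
Qed.

Lemma set1_pair {A B : Type} (p : A * B) : [set p] = [set p.1] `*` [set p.2].
Proof. by apply/seteqP; split => [q /= ->|[a b] /= [-> ->]] //; case: p. Qed.

Lemma measurable_set1_pair {R : realType} (p : R * R) : measurable [set p].
Proof. by rewrite set1_pair; apply: measurableX; exact: measurable_set1. Qed.

Lemma area_set1 {R : realType} (p : R * R) : area [set p] = 0%E.
Proof.
rewrite set1_pair /area product_measure1E ?measurable_set1 //.
by rewrite [X in (X * _)%E](_ : _ = 0%E) ?mul0e //; exact: lebesgue_measure_set1.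
Qed.

Lemma area_set1I {R : realType} (p : R * R) (G : set (R * R)) :
  measurable G -> area ([set p] `&` G) = 0%E.
Proof.
move=> mG; apply/eqP; rewrite -measure_le0 -(area_set1 p).
have m1 := measurable_set1_pair p.
by apply: le_measure; rewrite ?inE //; exact: (measurableI _ _ m1 mG).
Qed.

Theorem lemma3
  (R : realType) (d : measure_display) (Omega : measurableType d)
  (P : probability Omega R)
  (m : nat) (xs : 'I_m -> R * R) (G : set (R * R)) (Acal : R)
  (lam psi : R) (mu : 'I_m -> R)
  (tau : nat -> {mfun Omega >-> R})
  (X : nat -> {mfun Omega >-> (R * R)%type})
  (S : 'I_m -> nat -> {mfun Omega >-> R})
  (route : nat -> Omega -> option 'I_m) :
  (* the network region G: measurable, of finite positive area Acal *)
  measurable G -> area G = Acal%:E -> 0 < Acal ->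
  (* rates and latency bound *)
  0 < lam -> (forall i, 0 < mu i) -> 0 < psi ->
  (* Poisson arrivals of rate lam: i.i.d. Exp(lam) inter-arrival times *)
  (forall k B, measurable B ->
     distribution P (tau k) B = exponential_prob lam B) ->
  (* request locations i.i.d. uniform on G *)
  (forall k B, measurable B ->
     P (X k @^-1` B) = (area (B `&` G) * (Acal^-1)%:E)%E) ->
  (* exponential service times of rate mu i at S_i *)
  (forall i j B, measurable B ->
     distribution P (S i j) B = exponential_prob (mu i) B) ->
  (* all these primitive random variables are mutually independent *)
  mutually_independent P (cdn_events (fun k => tau k) (fun k => X k)
                                     (fun i j => S i j)) ->
  (* the routing policy only uses admissible servers *)
  (forall w, admissible_policy psi mu xs
               (fun k => arrival_time (fun j => tau j) k w)
               (fun k => X k w) (fun k => route k w)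
               (fun i j => S i j w)) ->
  {ae P, forall w, forall (i : 'I_m) (t : R) (N : nat),
     ((npending (fun k => arrival_time (fun j => tau j) k w)
                (fun k => route k w) (fun i j => S i j w) N i t)%:Z
      <= Num.ceil (psi * mu i - 1))%R}.
Proof.
move=> mG _ _ _ mu_gt0 psi_gt0 tau_exp X_unif _ _ admissible.
have tau_ge0 : {ae P, forall w, forall k, 0 <= tau k w}.
  by apply: ae_foralln => k; exact: ae_ge0_exponential (tau_exp k).
have X_off_servers : {ae P, forall w, forall k i, X k w != xs i}.
  apply: ae_foralln => k; apply: filter_forall => i.
  have := X_unif k _ (measurable_set1_pair (xs i)).
  rewrite area_set1I // mul0e => /(ae_preimage_null (measurable_set1_pair _)).
  by apply: filterS => w /= /eqP.
apply: filterS2 tau_ge0 X_off_servers => w tau_ge0 X_off i t N.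
apply: int_le_ceilB1.
rewrite -pmulrn.
apply: npending_lt_psi_mu => //; [exact: arrival_time_nondecreasing | exact: X_off].
Qed.
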